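(* Let $p = 2^n$ and let $f, g$ be univariate polynomials over a ring, each of degree $p-1$. Consider computing (part of) the product $f g$ by the clipped Karatsuba method described in the context, recursing down to single coefficients. Let $\ell$ be a natural number with $2^\ell < p$. If only the top $1/2^\ell$ fraction of the coefficients of $fg$ is required (equivalently, if only the bottom $1/2^\ell$ fraction is required), then the number of coefficient multiplications required is at most $K(p)/3^{\ell-1}$, where $K(p) = p^{\log_2 3}$ is the number of coefficient multiplications used by full (unclipped) Karatsuba multiplication of two polynomials with $p$ coefficients.
   Context: Karatsuba multiplication: for $f, g$ with $p$ coefficients ($p$ even), write $f = f_h x^{p/2} + f_l$, $g = g_h x^{p/2} + g_l$ with $f_h,f_l,g_h,g_l$ having $p/2$ coefficients, and put $f_m = f_h + f_l$, $g_m = g_h + g_l$. Then $fg = z_h x^p + z_m x^{p/2} + z_l$ with $z_h = f_h g_h$, $z_l = f_l g_l$, $z_m = f_m g_m - f_h g_h - f_l g_l$; the three products $f_h g_h$, $f_m g_m$, $f_l g_l$ are computed recursively, and a product of two one-coefficient polynomials costs one coefficient multiplication. Thus $K(1)=1$, $K(p) = 3K(p/2)$, so $K(p)=p^{\log_2 3}=3^n$. Clipped Karatsuba: when only a specified range of coefficients of $fg$ is required, only those of the three sub-products $f_hg_h$, $f_mg_m$, $f_lg_l$ (and only those of their coefficients) that are needed to form the required coefficients of $fg$ are computed, each again by clipped Karatsuba recursively; sub-products that are not needed are not computed at all. *)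

From mathcomp Require Import all_boot.
Set Implicit Arguments. Unset Strict Implicit. Unset Printing Implicit Defensive.

(* Cost model of clipped Karatsuba.
   [kara_cost n S] = number of coefficient multiplications performed by
   clipped Karatsuba when multiplying two polynomials with 2^n coefficients
   and only the coefficients of the product (indices 0 .. 2^(n+1)-2) lying
   in S are required.  With h = 2^(n-1), fg = z_h x^(2h) + z_m x^h + z_l,
   coefficient k of fg needs z_l[k], z_m[k-h], z_h[k-2h] (when in range),
   and z_m[j] = (f_m g_m)[j] - (f_h g_h)[j] - (f_l g_l)[j].
   Sub-products with no required coefficient cost 0 (are not computed). *)
Fixpoint kara_cost (n : nat) (S : pred nat) : nat :=
  match n with
  | 0 => S 0
  | m.+1 =>
    let h := 2 ^ m in
    let Sm := fun k => (k < h.*2.-1) && S (k + h) in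
    let Sl := fun k => ((k < h.*2.-1) && S k) || Sm k in
    let Sh := fun k => ((k < h.*2.-1) && S (k + h.*2)) || Sm k in
    kara_cost m Sl + kara_cost m Sm + kara_cost m Sh
  end.

(* full Karatsuba cost K(2^n) = 3^n *)
Definition K (n : nat) : nat := 3 ^ n.

From mathcomp Require Import all_boot.
From mathcomp Require Import zify.

(* Write h = p/2. Coefficient k of fg involves z_l only if k < 2h - 1, z_m
   only if h <= k < 3h - 1, and z_h only if 2h <= k. So when every required
   index is below h, only z_l is computed, at the same indices; when every
   required index is at least 3h - 1, only z_h is computed, at the indices
   shifted down by 2h. Hence clipping to the bottom (or top) 2^j coefficients
   costs no more than the same clipping at half the size, down to size 2^j,
   where the full cost 3^j is the bound. With 2^j = 2p / 2^l this gives
   3^(n+1-l) = 3 K(p) / 3^l. *)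

Lemma kara_cost_mono n (S S' : pred nat) :
  (forall k, S k -> S' k) -> kara_cost n S <= kara_cost n S'.
Proof.
elim: n S S' => [|m IHm] S S' sub_SS' /=.
  by case S0: (S 0); rewrite // (sub_SS' 0 S0).
apply: leq_add; first apply: leq_add; apply: IHm => k /=.
- by case/orP => /andP[-> /sub_SS' ->]; rewrite ?orbT.
- by case/andP => -> /sub_SS' ->.
- by case/orP => /andP[-> /sub_SS' ->]; rewrite ?orbT.
Qed.

Lemma kara_cost_le n (S : pred nat) : kara_cost n S <= K n.
Proof.
rewrite /K; elim: n S => [|m IHm] S /=; first by case: (S 0).
by rewrite expnS mulSn mulSn mul1n addnA !leq_add.
Qed.

Lemma kara_cost_le_exp n j (S : pred nat) : n <= j -> kara_cost n S <= 3 ^ j.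
Proof.
by move=> le_nj; apply: leq_trans (kara_cost_le _ _) (leq_pexp2l _ le_nj).
Qed.

Lemma kara_cost_pred0 n (S : pred nat) : (forall k, ~~ S k) -> kara_cost n S = 0.
Proof.
elim: n S => [|m IHm] S S0 /=; first by rewrite (negbTE (S0 0)).
by rewrite !IHm // => k; rewrite !(negbTE (S0 _)) !andbF.
Qed.

Lemma kara_cost_low_half m (S : pred nat) :
  (forall k, S k -> k < 2 ^ m) -> kara_cost m.+1 S <= kara_cost m S.
Proof.
move=> S_low /=.
have Sm0 : kara_cost m (fun k => (k < (2 ^ m).*2.-1) && S (k + 2 ^ m)) = 0.
  by apply: kara_cost_pred0 => k; apply/negP => /andP[_ /S_low]; lia.
have Sh0 : kara_cost m (fun k => ((k < (2 ^ m).*2.-1) && S (k + (2 ^ m).*2))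
             || ((k < (2 ^ m).*2.-1) && S (k + 2 ^ m))) = 0.
  by apply: kara_cost_pred0 => k; apply/negP => /orP[] /andP[_ /S_low]; lia.
rewrite Sm0 Sh0 !addn0; apply: kara_cost_mono => k.
by case/orP => /andP[_ //] /S_low; lia.
Qed.

Lemma kara_cost_high_quarter m (S : pred nat) :
  (forall k, S k -> (2 ^ m).*2 + (2 ^ m).-1 <= k) ->
  kara_cost m.+1 S <= kara_cost m (fun k => S (k + (2 ^ m).*2)).
Proof.
move=> S_high /=.
have Sl0 : kara_cost m (fun k => ((k < (2 ^ m).*2.-1) && S k)
             || ((k < (2 ^ m).*2.-1) && S (k + 2 ^ m))) = 0.
  by apply: kara_cost_pred0 => k; apply/negP => /orP[] /andP[? /S_high]; lia.
have Sm0 : kara_cost m (fun k => (k < (2 ^ m).*2.-1) && S (k + 2 ^ m)) = 0.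
  by apply: kara_cost_pred0 => k; apply/negP => /andP[? /S_high]; lia.
rewrite Sl0 Sm0 !add0n; apply: kara_cost_mono => k.
by case/orP => /andP[lt_k Sk] //; move: lt_k (S_high _ Sk); lia.
Qed.

Lemma kara_cost_bottom n j : kara_cost n (fun k => k < 2 ^ j) <= 3 ^ j.
Proof.
elim: n => [|m IHm]; first exact: kara_cost_le_exp.
have [jm | mj] := ltnP j m.+1; last exact: kara_cost_le_exp.
apply: leq_trans IHm; apply: kara_cost_low_half => k.
by move/leq_trans; apply; apply: leq_pexp2l.
Qed.

Lemma kara_cost_top n j :
  kara_cost n (fun k => ((2 ^ n).*2.-1 - 2 ^ j <= k) && (k < (2 ^ n).*2.-1))
  <= 3 ^ j.
Proof.
elim: n => [|m IHm]; first exact: kara_cost_le_exp.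
have [jm | mj] := ltnP j m.+1; last exact: kara_cost_le_exp.
have j_le : 2 ^ j <= 2 ^ m by apply: leq_pexp2l.
have pos_m : 0 < 2 ^ m by rewrite expn_gt0.
apply: leq_trans IHm; rewrite expnS.
apply: leq_trans; first (apply: kara_cost_high_quarter => k; lia).
by apply: kara_cost_mono => k /=; lia.
Qed.

Theorem theorem1 (n l : nat) (hl : 2 ^ l < 2 ^ n) :
  let p := 2 ^ n in
  let t := 2 ^ n.+1 %/ 2 ^ l in
  (* top 1/2^l fraction: the t highest coefficients of fg (indices < 2p-1) *)
  kara_cost n (fun k => (p.*2.-1 - t <= k) && (k < p.*2.-1)) * 3 ^ l <= K n * 3
  /\
  (* bottom 1/2^l fraction: the t lowest coefficients *)
  kara_cost n (fun k => k < t) * 3 ^ l <= K n * 3.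
Proof.
move=> p t.
have l_le : l <= n.+1 by move: hl; rewrite ltn_exp2l //; lia.
have -> : t = 2 ^ (n.+1 - l) by rewrite /t expnB.
have -> : K n * 3 = 3 ^ (n.+1 - l) * 3 ^ l by rewrite -expnD subnK // -expnSr.
by split; rewrite leq_mul2r ?kara_cost_top ?kara_cost_bottom orbT.
Qed.
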